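(* Let $x\ge2$, let $k=k(x)\ge2$, and let $m$ be a uniformly random integer in $[1,x]$. Then \[ \mathbb{P}\big(\exists\text{ prime }p>k:\ v_p(m)=1\big)=1-O\Big(\frac{\log k}{\log x}+\frac1k\Big), \] with an absolute implied constant.
   Context: $v_p$ denotes the $p$-adic valuation on the integers. *)

From HB Require Import structures.
From mathcomp Require Import all_boot all_order all_algebra.
From mathcomp Require Import all_classical all_reals all_analysis.
Set Implicit Arguments. Unset Strict Implicit. Unset Printing Implicit Defensive.
Import Order.TTheory GRing.Theory Num.Theory.
Local Open Scope ring_scope.

(* m has a prime factor p > k appearing to exactly the first power (v_p(m) = 1).
   Any such p divides m, so p <= m and it suffices to search p in [0, m]. *)
Definition has_large_simple_prime {R : realType} (k : R) (m : nat) : bool :=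
  has (fun p : nat => [&& prime p, k < p%:R & logn p m == 1%N]) (iota 0 m.+1).

Definition prob_large_simple_prime {R : realType} (x k : R) : R :=
  (count (has_large_simple_prime k) (iota 1 (Num.truncn x)))%:R / (Num.truncn x)%:R.

From HB Require Import structures.
From mathcomp Require Import all_boot all_order all_algebra.
From mathcomp Require Import all_classical all_reals all_analysis.
From mathcomp Require Import zify ring lra.
Import Order.TTheory GRing.Theory Num.Theory.
Set Implicit Arguments. Unset Strict Implicit. Unset Printing Implicit Defensive.

(* Let n = floor x and K = floor k.  If m <= n has no prime
   p > k with v_p(m) = 1, then every prime factor p > K of m divides it at least
   twice, so m is either K-smooth or divisible by j^2 for some K < j <= n.
   - Squareful integers: at most sum_(j > K) n / j^2 <= n / K of them.
   - Smooth integers: if s of the integers in [1, n] are K-smooth, splitting n!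
     into smooth and non-smooth factors gives n! * n^s <= K^(4n) * n^n, because
     the K-smooth part of n! is at most K^(4n) (Legendre's formula compares it
     with K!).  With n^n <= e^n n! this yields s * ln n <= 6 n ln K.
   Hence the exceptional proportion is at most 6 ln K / ln n + 1/K, and passing
   from (n, K) back to (x, k) costs a factor 2 in each term, giving C = 12.
   The file first proves the counting facts over nat, then the real estimates,
   and finally derives the theorem. *)

Lemma count_sub_in (T : eqType) (a b : pred T) (s : seq T) :
  {in s, forall x, a x -> b x} -> count a s <= count b s.
Proof.
move=> ab; have -> : count a s = count [predI a & mem s] s.
  by apply: eq_in_count => x xs; rewrite /= xs andbT.
by apply: sub_count => x /andP[ax xs]; apply: ab.
Qed.

Lemma count_multiples d n : 0 < d -> count (dvdn d) (iota 1 n) = n %/ d.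
Proof.
move=> d0; elim: n => [|n IH]; first by rewrite div0n.
rewrite -[n.+1]addn1 iotaD count_cat IH /=.
by rewrite addn0 add1n addn1 divnS // addnC.
Qed.

Lemma count_has_le_sum (I T : Type) (Q : I -> pred T) (js : seq I) (s : seq T) :
  count (fun m => has (Q^~ m) js) s <= \sum_(j <- js) count (Q j) s.
Proof.
elim: js => [|j js IH]; first by rewrite big_nil count_pred0.
rewrite big_cons (leq_trans _ (leq_add (leqnn _) IH)) //.
by rewrite -count_predUI (leq_trans _ (leq_addr _ _)).
Qed.

Definition smooth (K m : nat) : bool := [pred p | p <= K].-nat m.

(* Legendre: v_p(n!) <= n / (p - 1), proved through the partial sums of
   v_p(n!) = sum_i floor(n / p^i). *)
Lemma legendre_bound p n : prime p -> (p - 1) * logn p n`! <= n.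
Proof.
move=> pp; rewrite logn_fact //.
suff H m : (p - 1) * \sum_(1 <= i < m.+1) n %/ p ^ i + n %/ p ^ m <= n.
  by apply: leq_trans (H n); apply: leq_addr.
elim: m => [|m IH]; first by rewrite big_geq // muln0 expn0 divn1.
rewrite big_nat_recr //=.
have h : p * (n %/ p ^ m.+1) <= n %/ p ^ m.
  by rewrite expnSr divnMA mulnC leq_divM.
move: IH h; set S := \sum_(1 <= i < m.+1) _; set t := n %/ p ^ m.+1.
have := prime_gt0 pp; nia.
Qed.

(* For primes p <= K, v_p(n!) / n <= 4 v_p(K!) / K: the upper bound
   v_p(n!) <= 2n/p against the lower bound v_p(K!) >= floor(K/p) >= K/(2p). *)
Lemma logn_fact_compare p K n : prime p -> p <= K ->
  logn p n`! * K <= logn p K`! * (4 * n).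
Proof.
move=> pp pK.
have p2 := prime_gt1 pp.
have p0 := prime_gt0 pp.
have legendre := legendre_bound n pp.
have Kp : K < (K %/ p).+1 * p by apply: ltn_ceil; lia.
have Kp_pos : 0 < K %/ p by rewrite divn_gt0 //; lia.
have Kp_le : K %/ p <= logn p K`!.
  rewrite logn_fact // big_ltn ?ltnS ?(leq_trans (ltnW p2) pK) //.
  by rewrite expn1 leq_addr.
move: legendre Kp Kp_pos Kp_le.
set a := logn p n`!; set b := logn p K`!; set q := K %/ p => h1 h2 h3 h4.
have e1 : K <= 2 * q * p by nia.
have e2 : p * a <= 2 * n by nia.
have e3 : a * K <= 2 * q * (p * a) by nia.
nia.
Qed.

Lemma fact_le_pow K : K`! <= K ^ K.
Proof.
elim: K => // K IH; rewrite factS expnS leq_mul //.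
by case: K IH => // K IH; rewrite (leq_trans IH) // leq_exp2r.
Qed.

(* The K-smooth part of n! is at most K^(4n): its K-th power divides the
   K-smooth part of (K!)^(4n) <= K^(4nK), by comparing valuations prime by prime. *)
Lemma smooth_part_fact_le n K : 0 < K -> n`!`_[pred p | p <= K] <= K ^ (4 * n).
Proof.
move=> K0; set pi := [pred p | p <= K].
rewrite -(leq_exp2r _ _ K0) -partnX.
have fact_pow_gt0 m e : 0 < m`! ^ e by rewrite expn_gt0 fact_gt0.
apply: (@leq_trans (K`! ^ (4 * n))`_pi).
  set N := n`! ^ K + K`! ^ (4 * n).
  rewrite (@widen_partn N _ (n`! ^ K)) ?leq_addr //.
  rewrite (@widen_partn N _ (K`! ^ (4 * n))) ?leq_addl //.
  apply: leq_prod => p; rewrite inE => pK; rewrite !lognX.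
  case pp: (prime p); last by rewrite /logn pp !muln0.
  apply: leq_pexp2l; first exact: prime_gt0.
  by rewrite [K * _]mulnC [4 * n * _]mulnC logn_fact_compare.
apply: leq_trans (dvdn_leq (fact_pow_gt0 _ _) (dvdn_part _ _)) _.
have -> : (K ^ (4 * n)) ^ K = (K ^ K) ^ (4 * n) by rewrite -!expnM mulnC.
case: n => [|n] //; by rewrite leq_exp2r ?fact_le_pow ?muln_gt0.
Qed.

(* Splitting n! into smooth and non-smooth factors, where the latter are each
   at most n: n! * n^s <= K^(4n) * n^n for s the number of K-smooth m <= n. *)
Lemma smooth_count_bound n K : 0 < K ->
  n`! * n ^ count (smooth K) (iota 1 n) <= K ^ (4 * n) * n ^ n.
Proof.
move=> K0; set s := iota 1 n.
have Efact : n`! = \prod_(i <- s | smooth K i) i * \prod_(i <- s | ~~ smooth K i) i.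
  by rewrite fact_prod /index_iota subSS subn0 (bigID (smooth K)).
set P := \prod_(i <- s | smooth K i) i in Efact.
set Q := \prod_(i <- s | ~~ smooth K i) i in Efact.
have P_le : P <= K ^ (4 * n).
  have P_smooth : [pred p | p <= K].-nat P.
    by rewrite /P; elim/big_ind: _ => // a b Ha Hb; rewrite pnatM Ha Hb.
  apply: leq_trans (smooth_part_fact_le n K0).
  rewrite -(part_pnat_id P_smooth) dvdn_leq ?part_gt0 // partn_dvd ?fact_gt0 //.
  by rewrite Efact dvdn_mulr.
have Q_le : Q <= \prod_(i <- s | ~~ smooth K i) n.
  rewrite /Q big_seq_cond [X in _ <= X]big_seq_cond.
  by apply: leq_prod => i /andP[]; rewrite mem_iota; lia.
rewrite big_const_seq iter_muln_1 in Q_le.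
have -> : n ^ n = n ^ count (smooth K) s * n ^ count (fun i => ~~ smooth K i) s.
  by rewrite -expnD count_predC size_iota.
by rewrite Efact -mulnA (mulnC Q) !mulnA leq_mul // leq_mul.
Qed.

Definition squareful_above (K n m : nat) : bool :=
  has (fun j => j * j %| m) (iota K.+1 n).

Lemma count_exceptional_le K n :
  count (fun m => smooth K m || squareful_above K n m) (iota 1 n)
  <= count (smooth K) (iota 1 n) + \sum_(j <- iota K.+1 n) n %/ (j * j).
Proof.
apply: (@leq_trans (count (smooth K) (iota 1 n) + count (squareful_above K n) (iota 1 n))).
  by rewrite -count_predUI leq_addr.
rewrite leq_add2l (leq_trans (count_has_le_sum (fun j => dvdn (j * j)) _ _)) //.
rewrite big_seq [X in _ <= X]big_seq; apply: leq_sum => j.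
by rewrite mem_iota => /andP[jK _]; rewrite count_multiples // muln_gt0; lia.
Qed.

Local Open Scope ring_scope.

Section RealEstimates.
Variable R : realType.

(* Weak Stirling bound n^n <= e^n n!, from the n-th term of the series of e^n. *)
Lemma pow_le_expR_fact (n : nat) : (n%:R : R) ^+ n <= expR n%:R * n`!%:R.
Proof.
case: n => [|n]; first by rewrite expr0 fact0 mulr1 expR0.
rewrite -ler_pdivrMr ?ltr0n ?fact_gt0 //.
by apply: le_trans (expR_ge1Dxn n (ler0n _ _)); rewrite lerDr ler01.
Qed.

(* ln 2 >= 1/2, so that n <= 2 n ln K absorbs the factor e^n below. *)
Lemma half_le_ln2 : 1 / 2 <= ln (2 : R).
Proof.
have half : 1 + - (1 / 2) = (2 : R)^-1 by field.
have := @le_ln1Dx R (- (1 / 2)); rewrite half lnV ?posrE //; lra.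
Qed.

(* Taking logarithms in smooth_count_bound: s * ln n <= 6 n ln K. *)
Lemma smooth_count_ln (n K : nat) : (2 <= n)%N -> (2 <= K)%N ->
  (count (smooth K) (iota 1 n))%:R * ln (n%:R : R) <= 6 * n%:R * ln K%:R.
Proof.
move=> n2 K2; set s := count _ _.
have n0 : (0 : R) < n%:R by rewrite ltr0n; lia.
have K0 : (0 : R) < K%:R by rewrite ltr0n; lia.
have f0 : (0 : R) < n`!%:R by rewrite ltr0n fact_gt0.
have pow_le : (n%:R : R) ^+ s <= K%:R ^+ (4 * n) * expR n%:R.
  have nat_bound : n`!%:R * (n%:R : R) ^+ s <= K%:R ^+ (4 * n) * n%:R ^+ n.
    by rewrite -!natrX -!natrM ler_nat smooth_count_bound //; lia.
  rewrite -(ler_pM2l f0); apply: le_trans nat_bound _.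
  rewrite mulrCA ler_wpM2l ?exprn_ge0 ?ler0n // mulrC; exact: pow_le_expR_fact.
have ln_bound : s%:R * ln (n%:R : R) <= 4 * n%:R * ln K%:R + n%:R.
  move: pow_le; rewrite -ler_ln ?posrE ?mulr_gt0 ?exprn_gt0 ?expR_gt0 //.
  rewrite lnM ?posrE ?exprn_gt0 ?expR_gt0 // !lnXn // expRK.
  by rewrite mulr_natl -natrM mulr_natl.
have n_le : (n%:R : R) <= 2 * n%:R * ln K%:R.
  have lnK : 1 / 2 <= ln (K%:R : R).
    by apply: le_trans half_le_ln2 _; rewrite ler_ln ?posrE ?ler_nat.
  have : 0 <= n%:R * (2 * ln (K%:R : R) - 1) by apply: mulr_ge0; lra.
  lra.
lra.
Qed.

Lemma natr_divn_le (n d : nat) : ((n %/ d)%:R : R) <= n%:R / d%:R.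
Proof.
case: d => [|d]; first by rewrite divn0 invr0 mulr0.
by rewrite ler_pdivlMr ?ltr0n // -natrM ler_nat leq_divM.
Qed.

(* Telescoping tail bound sum_(K < j <= K + L) 1/j^2 <= 1/K - 1/(K + L). *)
Lemma sum_inv_sq_tail (K L : nat) : (0 < K)%N ->
  \sum_(j <- iota K.+1 L) ((j * j)%:R : R)^-1 <= K%:R^-1 - (K + L)%:R^-1.
Proof.
move=> K0; elim: L => [|L IH]; first by rewrite big_nil addn0 subrr.
rewrite -[L.+1]addn1 iotaD big_cat big_seq1 /= natrM.
have a0 : (0 : R) < (K + L)%:R by rewrite ltr0n addn_gt0 K0.
have -> : ((K.+1 + L)%:R : R) = (K + L)%:R + 1 by rewrite addSn -natr1.
have -> : ((K + (L + 1))%:R : R) = (K + L)%:R + 1 by rewrite addnA natrD.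
move: IH a0; set a := ((K + L)%:R : R) => IH a0.
have telescope : ((a + 1) * (a + 1))^-1 <= a^-1 - (a + 1)^-1.
  have -> : a^-1 - (a + 1)^-1 = (a * (a + 1))^-1 by field; lra.
  by rewrite lef_pV2 ?posrE ?mulr_gt0 //; lra.
lra.
Qed.

Lemma squareful_count_le (n K : nat) : (0 < K)%N ->
  ((\sum_(j <- iota K.+1 n) n %/ (j * j))%:R : R) <= n%:R / K%:R.
Proof.
move=> K0; rewrite natr_sum.
apply: (@le_trans _ _ (\sum_(j <- iota K.+1 n) n%:R / (j * j)%:R)).
  by apply: ler_sum => j _; apply: natr_divn_le.
rewrite -mulr_sumr ler_wpM2l ?ler0n //.
apply: le_trans (sum_inv_sq_tail n K0) _.
by rewrite gerBl invr_ge0 ler0n.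
Qed.

Lemma exceptional_fraction_le (n K : nat) : (2 <= n)%N -> (2 <= K)%N ->
  (count (fun m => smooth K m || squareful_above K n m) (iota 1 n))%:R / n%:R
    <= 6 * (ln (K%:R : R) / ln n%:R) + K%:R^-1.
Proof.
move=> n2 K2.
have n0 : (0 : R) < n%:R by rewrite ltr0n; lia.
have lnn0 : 0 < ln (n%:R : R) by apply: ln_gt0; rewrite ltr1n.
rewrite ler_pdivrMr // mulrDl.
apply: le_trans (_ : _ <= ((count (smooth K) (iota 1 n))%:R
  + (\sum_(j <- iota K.+1 n) n %/ (j * j))%:R)) _.
  by rewrite -natrD ler_nat count_exceptional_le.
apply: lerD.
  have -> : 6 * (ln (K%:R : R) / ln n%:R) * n%:R = 6 * n%:R * ln K%:R / ln n%:R.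
    by field; rewrite gt_eqF.
  by rewrite ler_pdivlMr // smooth_count_ln.
by rewrite mulrC squareful_count_le //; lia.
Qed.

(* If no prime p > k with k < K + 1 has v_p(m) = 1, then a prime factor p > K of
   a non-smooth m has v_p(m) >= 2, so m is squareful above K. *)
Lemma no_large_simple_prime (k : R) (K n m : nat) : k < K.+1%:R ->
  (0 < m <= n)%N -> ~~ has_large_simple_prime k m ->
  smooth K m || squareful_above K n m.
Proof.
move=> kK /andP[m0 mn] not_good.
case sm: (smooth K m) => //=.
move: sm; rewrite /smooth /pnat m0 /= => /allPn [p pm pK].
rewrite inE /= -ltnNge in pK.
move: pm; rewrite mem_primes => /and3P [pp _ pdm].
have pm : (p <= m)%N by apply: dvdn_leq.
have kp : k < p%:R by apply: lt_le_trans kK _; rewrite ler_nat.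
have logn_ne1 : logn p m != 1%N.
  apply: contra not_good => /eqP l1; apply/hasP; exists p.
    by rewrite mem_iota; lia.
  by rewrite pp kp l1.
apply/hasP; exists p; first by rewrite mem_iota; lia.
rewrite mulnn pfactor_dvdn // ltn_neqAle eq_sym logn_ne1.
by rewrite logn_gt0 mem_primes pp m0 pdm.
Qed.

Lemma one_sub_prob (x k : R) : (0 < Num.truncn x)%N ->
  1 - prob_large_simple_prime x k =
  (count (predC (has_large_simple_prime k)) (iota 1 (Num.truncn x)))%:R
    / (Num.truncn x)%:R.
Proof.
rewrite /prob_large_simple_prime; set n := Num.truncn x => n0.
have nR : (n%:R : R) != 0 by rewrite pnatr_eq0 -lt0n.
have count_split : (n%:R : R) = (count (has_large_simple_prime k) (iota 1 n))%:R
    + (count (predC (has_large_simple_prime k)) (iota 1 n))%:R.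
  by rewrite -natrD count_predC size_iota.
rewrite -[X in X - _](divff nR) -mulrBl; congr (_ / _).
by rewrite [in LHS]count_split addrAC subrr add0r.
Qed.

(* Passing from floor x back to x: x < floor x + 1 <= (floor x)^2. *)
Lemma ln_le_twice_ln_truncn (x : R) : 2 <= x -> ln x <= 2 * ln (Num.truncn x)%:R.
Proof.
move=> x2; set n := Num.truncn x.
have n2 : (2 <= n)%N by rewrite truncn_ge_nat //; lra.
have n0 : (0 : R) < n%:R by rewrite ltr0n; lia.
have x_le : x <= n%:R * n%:R.
  apply: (le_trans (ltW (truncnS_gt x))); rewrite -/n -natrM ler_nat; nia.
move: x_le; rewrite -ler_ln ?posrE ?mulr_gt0 //; last lra.
by rewrite lnM ?posrE //; lra.
Qed.

Lemma ln_ratio_truncn (x k : R) : 2 <= x -> 2 <= k ->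
  ln (Num.truncn k)%:R / ln (Num.truncn x)%:R <= 2 * (ln k / ln x).
Proof.
move=> x2 k2; set n := Num.truncn x; set K := Num.truncn k.
have n2 : (2 <= n)%N by rewrite truncn_ge_nat //; lra.
have K0 : (0 : R) < K%:R by rewrite ltr0n truncn_gt0; lra.
have lnn0 : 0 < ln (n%:R : R) by apply: ln_gt0; rewrite ltr1n.
have lnx0 : 0 < ln x by apply: ln_gt0; lra.
have lnk0 : 0 <= ln k by apply: ln_ge0; lra.
have lnK_le : ln (K%:R : R) <= ln k.
  by rewrite ler_ln ?posrE ?truncn_le //; lra.
rewrite ler_pdivrMr //; apply: le_trans lnK_le _.
have -> : 2 * (ln k / ln x) * ln n%:R = ln k * (2 * ln n%:R / ln x) by field; rewrite gt_eqF.
rewrite ler_peMr // ler_pdivlMr // mul1r; exact: ln_le_twice_ln_truncn.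
Qed.

(* 1 / floor k <= 2 / k, since k < floor k + 1 <= 2 floor k. *)
Lemma inv_truncn_le (k : R) : 2 <= k -> (Num.truncn k)%:R^-1 <= 2 * k^-1.
Proof.
move=> k2; set K := Num.truncn k.
have K0 : (0 : R) < K%:R by rewrite ltr0n truncn_gt0; lra.
have k_le : k <= 2 * K%:R by move: (truncnS_gt k); rewrite -/K -natr1; lra.
have -> : (K%:R : R)^-1 = 2 * (2 * K%:R)^-1 by field; rewrite gt_eqF.
by rewrite ler_pM2l // lef_pV2 ?posrE //; lra.
Qed.
End RealEstimates.

Theorem proposition4p2 (R : realType) :
  exists C : R, 0 < C /\
    forall x k : R, 2 <= x -> 2 <= k ->
      `|1 - prob_large_simple_prime x k| <= C * (ln k / ln x + k^-1).
Proof.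
exists 12; split=> [|x k x2 k2]; first lra.
set n := Num.truncn x; set K := Num.truncn k.
have n2 : (2 <= n)%N by rewrite truncn_ge_nat //; lra.
have K2 : (2 <= K)%N by rewrite truncn_ge_nat //; lra.
have n0 : (0 : R) < n%:R by rewrite ltr0n; lia.
rewrite one_sub_prob -/n; last by lia.
rewrite ger0_norm ?divr_ge0 ?ler0n //.
have bad_le : (count (predC (has_large_simple_prime k)) (iota 1 n) <=
    count (fun m => smooth K m || squareful_above K n m) (iota 1 n))%N.
  apply: count_sub_in => m; rewrite mem_iota => m_range.
  by apply: no_large_simple_prime (truncnS_gt k) _; lia.
apply: le_trans (_ : _ <= 6 * (ln (K%:R : R) / ln n%:R) + K%:R^-1) _.
  apply: le_trans (exceptional_fraction_le R n2 K2).
  by rewrite ler_pM2r ?invr_gt0 // ler_nat.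
have k_inv_ge0 : 0 <= k^-1 by rewrite invr_ge0; lra.
have := ln_ratio_truncn x2 k2; have := inv_truncn_le k2; rewrite -/n -/K; lra.
Qed.
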